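(* Let $C\ge1$ and run Algorithm 3 (described in the context) on an instance of dynamic bin packing with migration delays. Then any item whose initial duration satisfies $d\in[M\sqrt{C},(M+1)\sqrt{C})$ for an integer $M\ge0$ has delayed duration $\tilde d\le d+M\cdot C$. In particular, $\tilde d\le O(\sqrt{C})\cdot d$.
   Context: Dynamic bin packing with migration delays: bins have capacity $1$; items arrive online at times $a_i\ge0$ with size $s_i\in[0,1]$ and initial duration $d_i>0$ (unknown at arrival). Each time an item is migrated (moved to another bin), its duration is increased by $C$; the delayed duration of item $i$ is $\tilde d_i=d_i+(\text{number of migrations of } i)\cdot C$, and the item leaves the system at time $a_i+\tilde d_i$. FirstFit on a pool of bins places an item into the earliest-opened bin of that pool with enough remaining capacity, or opens a new bin in the pool. Algorithm 3: maintain two disjoint pools of bins, $I_s$ (small) and $I_b$ (big). Each arriving item is placed into $I_s$ using FirstFit. When an item has been in $I_s$ for exactly $\sqrt{C}$ time, it is migrated into $I_b$ using FirstFit. When an item has been in $I_b$ for exactly $C+\sqrt{C}$ time since its most recent migration, it is migrated again, into $I_b$ using FirstFit. *)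

From Stdlib Require Import Reals Lra List.
Open Scope R_scope.

(** Dynamic bin packing with migration delays, Algorithm 3.
    Under Algorithm 3 every migration of an item is triggered purely by a
    timer attached to the item (sqrt C spent in pool I_s, resp. C + sqrt C
    spent in pool I_b since its most recent migration); the choice of the bin
    by FirstFit inside a pool never influences when (or whether) an item is
    migrated.  Hence the migration history of an item -- and thus its delayed
    duration -- is fully described by the following per-item trajectory. *)

Inductive pool := PoolSmall | PoolBig.

Definition alg3_wait (C : R) (p : pool) : R :=
  match p with
  | PoolSmall => sqrt C
  | PoolBig => C + sqrt C
  end.

(** [alg3_traj C a d p e k ms] : an item with arrival time [a] and initial
    duration [d], currently in pool [p] which it entered (arrival or most
    recent migration) at absolute time [e], having been migrated [k] times so
    far, undergoes exactly the further migrations at the absolute times listed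
    in [ms].  An item with [k] migrations is present during
    [a, a + d + k*C) and leaves the system at time [a + d + k*C]; a
    migration scheduled at a time when the item has already left does not
    happen. *)
Fixpoint alg3_traj (C a d : R) (p : pool) (e : R) (k : nat) (ms : list R)
  : Prop :=
  match ms with
  | nil => a + d + INR k * C <= e + alg3_wait C p
  | m :: ms' =>
      m = e + alg3_wait C p /\
      m < a + d + INR k * C /\
      alg3_traj C a d PoolBig m (S k) ms'
  end.

Definition alg3_run (C a d : R) (ms : list R) : Prop :=
  alg3_traj C a d PoolSmall a 0 ms.

Definition delayed_duration (C d : R) (ms : list R) : R :=
  d + INR (length ms) * C.

(** Under Algorithm 3 the migrations of an item happen at fixed times: after
    [k] migrations the next one is due at [a + (k+1) sqrt C + k C], and it
    happens iff the item, which then leaves at [a + d + k C], is still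
    present, i.e. iff [(k+1) sqrt C < d].  Hence an item is migrated exactly
    [n] times, where [n] is the largest integer with [n sqrt C < d]; for
    [d < (M+1) sqrt C] this gives [n <= M], and [n C = (n sqrt C) sqrt C < d sqrt C]. *)

From Stdlib Require Import Reals List Lra.
Open Scope R_scope.

Section Trajectory.

Variables C a d : R.

Definition migration_time (k : nat) : R := a + INR (S k) * sqrt C + INR k * C.

Lemma migration_time_0 : a + alg3_wait C PoolSmall = migration_time 0.
Proof. unfold migration_time; simpl; lra. Qed.

Lemma migration_time_S (k : nat) :
  migration_time k + alg3_wait C PoolBig = migration_time (S k).
Proof. unfold migration_time; simpl alg3_wait; rewrite !S_INR; lra. Qed.

Lemma alg3_traj_count_lt (ms : list R) : forall k p e,
  e + alg3_wait C p = migration_time k ->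
  INR k * sqrt C < d ->
  alg3_traj C a d p e k ms ->
  INR (k + length ms) * sqrt C < d.
Proof.
  induction ms as [|m ms IH]; intros k p e Hdue Hk Htraj; simpl in *.
  - now rewrite Nat.add_0_r.
  - destruct Htraj as [Hm [Hpresent Htraj]].
    rewrite <- Nat.add_succ_comm.
    apply (IH (S k) PoolBig m); [| | exact Htraj].
    + rewrite Hm, Hdue; apply migration_time_S.
    + rewrite Hm, Hdue in Hpresent; unfold migration_time in Hpresent; lra.
Qed.

Lemma alg3_traj_exists (n : nat) : forall k p e,
  e + alg3_wait C p = migration_time k ->
  d <= INR (k + n) * sqrt C ->
  exists ms, alg3_traj C a d p e k ms.
Proof.
  pose proof (sqrt_pos C) as Hs.
  induction n as [|n IH]; intros k p e Hdue Hd.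
  - exists nil; simpl; rewrite Hdue; unfold migration_time.
    rewrite Nat.add_0_r in Hd; rewrite S_INR; lra.
  - destruct (Rle_lt_dec d (INR (S k) * sqrt C)) as [Hstop | Hgo].
    + exists nil; simpl; rewrite Hdue; unfold migration_time; lra.
    + destruct (IH (S k) PoolBig (e + alg3_wait C p)) as [ms Hms].
      * rewrite Hdue; apply migration_time_S.
      * now rewrite Nat.add_succ_comm.
      * exists (e + alg3_wait C p :: ms); simpl; repeat split; [| exact Hms].
        rewrite Hdue; unfold migration_time; lra.
Qed.

Lemma alg3_run_count_lt (ms : list R) :
  0 < d -> alg3_run C a d ms -> INR (length ms) * sqrt C < d.
Proof.
  intros Hd Hrun.
  apply (alg3_traj_count_lt ms 0 PoolSmall a migration_time_0); [simpl; lra | exact Hrun].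
Qed.

Lemma alg3_run_exists : 0 < C -> exists ms, alg3_run C a d ms.
Proof.
  intros HC.
  destruct (INR_archimed (sqrt C) d (sqrt_lt_R0 C HC)) as [n Hn].
  apply (alg3_traj_exists n 0 PoolSmall a migration_time_0); simpl; lra.
Qed.

End Trajectory.

Lemma delayed_duration_le_bucket (C d : R) (M : nat) (ms : list R) :
  0 < C -> INR (length ms) * sqrt C < d -> d < (INR M + 1) * sqrt C ->
  delayed_duration C d ms <= d + INR M * C.
Proof.
  intros HC Hn HM.
  pose proof (sqrt_lt_R0 C HC) as Hs.
  assert (Hlen : (length ms <= M)%nat).
  { apply Nat.lt_succ_r, INR_lt; rewrite S_INR.
    apply (Rmult_lt_reg_r (sqrt C)); lra. }
  unfold delayed_duration.
  apply Rplus_le_compat_l, Rmult_le_compat_r; [lra | now apply le_INR].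
Qed.

Lemma delayed_duration_le_sqrt_mul (C d : R) (ms : list R) :
  0 <= C -> INR (length ms) * sqrt C < d ->
  delayed_duration C d ms <= (1 + sqrt C) * d.
Proof.
  intros HC Hn.
  pose proof (sqrt_pos C) as Hs.
  assert (HnC : INR (length ms) * C <= d * sqrt C).
  { rewrite <- (sqrt_sqrt C HC) at 1; rewrite <- Rmult_assoc.
    apply Rmult_le_compat_r; lra. }
  unfold delayed_duration; lra.
Qed.

Theorem lemma15 (C a d : R) (M : nat) :
  1 <= C -> 0 <= a -> 0 < d ->
  INR M * sqrt C <= d < (INR M + 1) * sqrt C ->
  (exists ms, alg3_run C a d ms) /\
  (forall ms, alg3_run C a d ms ->
     delayed_duration C d ms <= d + INR M * C /\
     delayed_duration C d ms <= (1 + sqrt C) * d).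
Proof.
  intros HC _ Hd [_ HM].
  split.
  - apply alg3_run_exists; lra.
  - intros ms Hrun.
    pose proof (alg3_run_count_lt C a d ms Hd Hrun) as Hn.
    split.
    + apply delayed_duration_le_bucket; lra.
    + apply delayed_duration_le_sqrt_mul; lra.
Qed.
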